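(* Let $\mathbb{X}$ be a uniformly smooth Banach space and $\delta>0$. Suppose $V\subset\mathbb{X}$ is a $\delta$-separated set with $\#V\geq2$ and there exist a line $L$ and a number $0\leq\alpha\leq43/1224$ such that $\mathrm{dist}(x,L)\leq\alpha\delta$ for all $x\in V$. Then for all $v_1,v_2\in V$, $$|\Pi_L(v_1)-\Pi_L(v_2)|\leq|v_1-v_2|\leq\bigl(1+\rho_{\mathbb{X}}(102\alpha)\bigr)|\Pi_L(v_1)-\Pi_L(v_2)|.$$
   Context: All Banach spaces are real; a line is a one-dimensional affine subspace. $V$ is $\delta$-separated if $|v-w|\geq\delta$ for distinct $v,w\in V$. The modulus of smoothness is $\rho_{\mathbb{X}}(t)=\sup_{|x|=1,|y|=t}\tfrac12(|x+y|+|x-y|)-1$; $\mathbb{X}$ is uniformly smooth if $\rho_{\mathbb{X}}(t)/t\to0$ as $t\to0$. In a uniformly smooth space the normalized duality mapping $J:\mathbb{X}\to\mathbb{X}^*$ (with $|J(x)|_{\mathbb{X}^*}=|x|$, $\langle J(x),x\rangle=|x|^2$) is unique. For a one-dimensional linear subspace $L$, the $J$-projection is $\Pi_L(x)=\langle J(v),x\rangle v$ with $v\in L$, $|v|=1$; for an affine line $L$ and $q\in L$, $\Pi_L(x)=q+\Pi_{L-q}(x-q)$. *)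

From Stdlib Require Import Reals Lra ClassicalEpsilon.
Open Scope R_scope.

Record Banach := {
  car :> Type;
  vadd : car -> car -> car;
  vzero : car;
  vopp : car -> car;
  vscal : R -> car -> car;
  vnorm : car -> R;
  vaddA : forall x y z, vadd x (vadd y z) = vadd (vadd x y) z;
  vaddC : forall x y, vadd x y = vadd y x;
  vadd0 : forall x, vadd x vzero = x;
  vaddN : forall x, vadd x (vopp x) = vzero;
  vscalA : forall a b x, vscal a (vscal b x) = vscal (a * b) x;
  vscal1 : forall x, vscal 1 x = x;
  vscalDr : forall a x y, vscal a (vadd x y) = vadd (vscal a x) (vscal a y);
  vscalDl : forall a b x, vscal (a + b) x = vadd (vscal a x) (vscal b x);
  vnorm_ge0 : forall x, 0 <= vnorm x;
  vnorm_eq0 : forall x, vnorm x = 0 -> x = vzero;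
  vnorm_scal : forall a x, vnorm (vscal a x) = Rabs a * vnorm x;
  vnorm_triangle : forall x y, vnorm (vadd x y) <= vnorm x + vnorm y;
  vcomplete : forall u : nat -> car,
    (forall eps, eps > 0 -> exists N, forall n m, (n >= N)%nat -> (m >= N)%nat ->
        vnorm (vadd (u n) (vopp (u m))) < eps) ->
    exists l, forall eps, eps > 0 -> exists N, forall n, (n >= N)%nat ->
        vnorm (vadd (u n) (vopp l)) < eps
}.

Arguments vadd {_}. Arguments vzero {_}. Arguments vopp {_}.
Arguments vscal {_}. Arguments vnorm {_}.

Definition vsub {X : Banach} (x y : X) : X := vadd x (vopp y).

(* Supremum of a set of reals (the least upper bound, chosen classically;
   meaningful when the set is nonempty and bounded above). *)
Definition Rsup (E : R -> Prop) : R := epsilon (inhabits 0) (fun r => is_lub E r).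
Definition Rinf (E : R -> Prop) : R := - Rsup (fun s => E (- s)).

Definition rho_set (X : Banach) (t : R) : R -> Prop :=
  fun s => exists x y : X, vnorm x = 1 /\ vnorm y = t /\
     s = (vnorm (vadd x y) + vnorm (vsub x y)) / 2 - 1.
Definition rho (X : Banach) (t : R) : R := Rsup (rho_set X t).

Definition uniformly_smooth (X : Banach) : Prop :=
  forall eps, eps > 0 -> exists d, d > 0 /\
    forall t, 0 < t < d -> Rabs (rho X t / t) < eps.

Definition linear_functional {X : Banach} (f : X -> R) : Prop :=
  (forall x y, f (vadd x y) = f x + f y) /\ (forall a x, f (vscal a x) = a * f x).
Definition bounded_functional {X : Banach} (f : X -> R) : Prop :=
  exists C, forall x, Rabs (f x) <= C * vnorm x.
Definition dual_norm {X : Banach} (f : X -> R) : R :=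
  Rsup (fun s => exists x : X, vnorm x <= 1 /\ s = Rabs (f x)).

Definition is_duality_value {X : Banach} (x : X) (f : X -> R) : Prop :=
  linear_functional f /\ bounded_functional f /\
  dual_norm f = vnorm x /\ f x = vnorm x ^ 2.

Definition is_line {X : Banach} (L : X -> Prop) : Prop :=
  exists (q w : X), w <> vzero /\
    forall x, L x <-> exists t : R, x = vadd q (vscal t w).

Definition distL {X : Banach} (x : X) (L : X -> Prop) : R :=
  Rinf (fun s => exists y, L y /\ s = vnorm (vsub x y)).

Definition separated {X : Banach} (delta : R) (V : X -> Prop) : Prop :=
  forall v w, V v -> V w -> v <> w -> vnorm (vsub v w) >= delta.

(* J-projection onto the affine line through q with unit direction v,
   where f = J(v):  Pi(x) = q + <J(v), x - q> v. *)
Definition Jproj {X : Banach} (q v : X) (f : X -> R) (x : X) : X :=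
  vadd q (vscal (f (vsub x q)) v).

(* Write w = v1 - v2 and let f = J(v).  The projections differ by f(w) v, and
   |f| = 1 gives the first inequality.  The complementary projection
   P z = z - f(z) v vanishes on the direction of L and has norm at most 2, so
   |P w| <= 4 alpha delta, while |w| >= delta; hence x = w / f(w) satisfies
   f(x) = 1 and |x - v| <= 51 alpha.  A point on the hyperplane {f = 1} that
   close to v has norm at most 1 + rho(102 alpha): it and its reflection
   2v - x (of norm >= 1) are convex combinations of v and v +- y with
   |y| = 102 alpha.  Uniform smoothness, #V >= 2 and the precise value 43/1224
   are not needed. *)

From Stdlib Require Import Reals Lra ClassicalEpsilon Classical.
Open Scope R_scope.

Section VectorAlgebra.

Context {X : Banach}.
Implicit Types (x y z a b c : X) (s t : R).

Lemma vaddK a b : vadd (vadd a b) (vopp a) = b.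
Proof. rewrite (vaddC _ a b), <- vaddA, vaddN, vadd0. reflexivity. Qed.

Lemma vaddI a b c : vadd a b = vadd a c -> b = c.
Proof. intro H. rewrite <- (vaddK a b), H, vaddK. reflexivity. Qed.

Lemma vadd0l x : vadd vzero x = x.
Proof. rewrite vaddC, vadd0. reflexivity. Qed.

Lemma vscal0 x : vscal 0 x = vzero.
Proof.
  apply (vaddI (vscal 0 x)). rewrite vadd0, <- vscalDl, Rplus_0_r. reflexivity.
Qed.

Lemma vopp_scal x : vopp x = vscal (-1) x.
Proof.
  apply (vaddI x). rewrite vaddN. rewrite <- (vscal1 _ x) at 1.
  rewrite <- vscalDl, Rplus_opp_r, vscal0. reflexivity.
Qed.

Lemma vnorm0 : vnorm (@vzero X) = 0.
Proof. rewrite <- (vscal0 vzero), vnorm_scal, Rabs_R0. ring. Qed.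

Lemma vnorm_opp x : vnorm (vopp x) = vnorm x.
Proof.
  rewrite vopp_scal, vnorm_scal. replace (-1) with (- (1)) by ring.
  rewrite Rabs_Ropp, Rabs_R1. ring.
Qed.

Lemma vnorm_sub_le x y : vnorm (vsub x y) <= vnorm x + vnorm y.
Proof. rewrite <- (vnorm_opp y). apply vnorm_triangle. Qed.

Lemma vadd_swap a b c z : vadd (vadd a b) (vadd c z) = vadd (vadd a c) (vadd b z).
Proof. rewrite <- !vaddA. f_equal. rewrite !vaddA. f_equal. apply vaddC. Qed.

Lemma vopp_add x y : vopp (vadd x y) = vadd (vopp x) (vopp y).
Proof. rewrite !vopp_scal. apply vscalDr. Qed.

Lemma vsub_addl a b c : vsub (vadd a b) (vadd a c) = vsub b c.
Proof. unfold vsub. rewrite vopp_add, vadd_swap, vaddN, vadd0l. reflexivity. Qed.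

Lemma vadd_subr x y : vadd y (vsub x y) = x.
Proof. unfold vsub. rewrite (vaddC _ x), vaddA, vaddN, vadd0l. reflexivity. Qed.

Lemma vsub_addr x y : vadd (vsub x y) y = x.
Proof. rewrite vaddC. apply vadd_subr. Qed.

Lemma vsub_subsub a b c : vsub (vsub a c) (vsub b c) = vsub a b.
Proof. unfold vsub. rewrite vopp_add, vadd_swap, vaddN, vadd0. reflexivity. Qed.

Lemma vsub_scal s t x : vsub (vscal s x) (vscal t x) = vscal (s - t) x.
Proof. unfold vsub. rewrite vopp_scal, vscalA, <- vscalDl. f_equal. ring. Qed.

Lemma vadd_scal_convex a b t :
  vadd a (vscal t b) = vadd (vscal (1 - t) a) (vscal t (vadd a b)).
Proof.
  rewrite vscalDr, vaddA, <- vscalDl. replace (1 - t + t) with 1 by ring.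
  rewrite vscal1. reflexivity.
Qed.

Lemma linear_functional0 (f : X -> R) : linear_functional f -> f vzero = 0.
Proof. intros [_ Hs]. rewrite <- (vscal0 vzero), Hs. ring. Qed.

Lemma linear_functional_sub (f : X -> R) x y :
  linear_functional f -> f (vsub x y) = f x - f y.
Proof. intros [Ha Hs]. unfold vsub. rewrite Ha, vopp_scal, Hs. ring. Qed.

End VectorAlgebra.

Lemma Rsup_lub (E : R -> Prop) : (exists x, E x) -> bound E -> is_lub E (Rsup E).
Proof.
  intros Hne Hb. unfold Rsup. apply epsilon_spec.
  destruct (completeness E Hb Hne) as [m Hm]. exists m; exact Hm.
Qed.

Lemma distL_approx {X : Banach} (x q : X) (L : X -> Prop) r : L q ->
  distL x L <= r -> forall eps, eps > 0 -> exists y, L y /\ vnorm (vsub x y) < r + eps.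
Proof.
  intros Hq Hd eps He. unfold distL, Rinf in Hd.
  set (E := fun s => exists y, L y /\ - s = vnorm (vsub x y)) in Hd.
  assert (Hlub : is_lub E (Rsup E)).
  { apply Rsup_lub.
    - exists (- vnorm (vsub x q)). exists q. split; auto. ring.
    - exists 0. intros s [y [_ Hy]]. pose proof (vnorm_ge0 _ (vsub x y)). lra. }
  destruct Hlub as [_ Hleast].
  apply NNPP. intro Hfar.
  assert (Hub : is_upper_bound E (Rsup E - eps)).
  { intros s [y [Hy Hs]]. apply Rnot_lt_le. intro Hlt.
    apply Hfar. exists y. split; auto. lra. }
  apply Hleast in Hub. lra.
Qed.

Section DualityValue.

Context {X : Banach} (v : X) (f : X -> R).
Hypotheses (Hv : vnorm v = 1) (Hf : is_duality_value v f).

Lemma duality_value_linear : linear_functional f.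
Proof. apply Hf. Qed.

Lemma duality_value_unit : f v = 1.
Proof. destruct Hf as [_ [_ [_ Hfv]]]. rewrite Hfv, Hv. ring. Qed.

Lemma duality_value_bound z : Rabs (f z) <= vnorm z.
Proof.
  destruct Hf as [Hl [[C HC] [Hd _]]].
  assert (Hlub : is_lub (fun s => exists x : X, vnorm x <= 1 /\ s = Rabs (f x))
                        (dual_norm f)).
  { apply Rsup_lub.
    - exists (Rabs (f vzero)), vzero. rewrite vnorm0. split; [lra | reflexivity].
    - exists (Rabs C). intros s [x [Hx ->]].
      pose proof (HC x). pose proof (vnorm_ge0 _ x). pose proof (Rle_abs C).
      pose proof (Rabs_pos C). nra. }
  rewrite Hd, Hv in Hlub. destruct Hlub as [Hub _].
  destruct (Req_dec (vnorm z) 0) as [H0 | H0].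
  - apply vnorm_eq0 in H0. subst z.
    rewrite linear_functional0 by exact Hl. rewrite Rabs_R0, vnorm0. lra.
  - assert (Hp : 0 < vnorm z) by (pose proof (vnorm_ge0 _ z); lra).
    assert (Hunit : Rabs (f (vscal (/ vnorm z) z)) <= 1).
    { apply Hub. exists (vscal (/ vnorm z) z). split; [|reflexivity].
      rewrite vnorm_scal, Rabs_inv, Rabs_pos_eq, Rinv_l by lra. lra. }
    destruct Hl as [_ Hs]. rewrite Hs, Rabs_mult, Rabs_inv, Rabs_pos_eq in Hunit by lra.
    apply (Rmult_le_reg_l (/ vnorm z)); [apply Rinv_0_lt_compat; lra |].
    rewrite Rinv_l by lra. exact Hunit.
Qed.

Definition coproj (z : X) : X := vsub z (vscal (f z) v).

Lemma coproj_decomp z : z = vadd (coproj z) (vscal (f z) v).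
Proof. symmetry. apply vsub_addr. Qed.

Lemma coproj_sub x y : coproj (vsub x y) = vsub (coproj x) (coproj y).
Proof.
  unfold coproj. rewrite (linear_functional_sub f _ _ duality_value_linear).
  rewrite <- vsub_scal. unfold vsub.
  rewrite !vopp_add, !vopp_scal, !vscalA, vadd_swap.
  reflexivity.
Qed.

Lemma coproj_line q t : coproj (vadd q (vscal t v)) = coproj q.
Proof.
  destruct duality_value_linear as [Ha Hs].
  unfold coproj. rewrite Ha, Hs, duality_value_unit, Rmult_1_r, vscalDl.
  rewrite (vaddC _ q), (vaddC _ (vscal (f q) v)). apply vsub_addl.
Qed.

Lemma coproj_bound z : vnorm (coproj z) <= 2 * vnorm z.
Proof.
  unfold coproj. eapply Rle_trans; [apply vnorm_sub_le |].
  rewrite vnorm_scal, Hv. pose proof (duality_value_bound z). lra.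
Qed.

Lemma coproj_near_line (L : X -> Prop) q z r :
  L q -> (forall x, L x <-> exists t, x = vadd q (vscal t v)) ->
  distL z L <= r -> vnorm (vsub (coproj z) (coproj q)) <= 2 * r.
Proof.
  intros Hq HL Hd. apply Rle_plus_epsilon. intros eps He.
  destruct (distL_approx z q L r Hq Hd (eps / 2)) as [y [Hy Hzy]]; [lra |].
  destruct (proj1 (HL y) Hy) as [t ->].
  rewrite <- (coproj_line q t), <- coproj_sub.
  pose proof (coproj_bound (vsub z (vadd q (vscal t v)))). lra.
Qed.

Lemma Jproj_sub q x y : vsub (Jproj q v f x) (Jproj q v f y) = vscal (f (vsub x y)) v.
Proof.
  unfold Jproj. rewrite vsub_addl, vsub_scal.
  rewrite !(linear_functional_sub f _ _ duality_value_linear). f_equal. ring.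
Qed.

Lemma rho_set_witness t : 0 <= t ->
  rho_set X t ((vnorm (vadd v (vscal t v)) + vnorm (vsub v (vscal t v))) / 2 - 1).
Proof.
  intros Ht. exists v, (vscal t v).
  rewrite vnorm_scal, Hv, Rabs_pos_eq by lra. auto with real.
Qed.

Lemma rho_lub t : 0 <= t -> is_lub (rho_set X t) (rho X t).
Proof.
  intros Ht. apply Rsup_lub; [eexists; exact (rho_set_witness t Ht) |].
  exists t. intros s [x [y [Hx [Hy ->]]]].
  pose proof (vnorm_triangle _ x y). pose proof (vnorm_sub_le x y). lra.
Qed.

Lemma rho_ge0 t : 0 <= t -> 0 <= rho X t.
Proof.
  intros Ht. eapply Rle_trans; [| exact (proj1 (rho_lub t Ht) _ (rho_set_witness t Ht))].
  rewrite <- (vscal1 _ v) at 1 3. rewrite <- vscalDl, vsub_scal, !vnorm_scal, Hv.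
  rewrite Rabs_pos_eq by lra. pose proof (Rle_abs (1 - t)). lra.
Qed.

(* With u = x - v and y = u * tau / |u|, both x = (1 - l) v + l (v + y) and
   v - u = (1 - l) v + l (v - y) for l = |u| / tau, while |v - u| >= f (v - u) = 1. *)
Lemma norm_le_rho_ratio x tau : f x = 1 -> 0 < tau -> vnorm (vsub x v) <= tau ->
  vnorm x <= 1 + 2 * (vnorm (vsub x v) / tau) * rho X tau.
Proof.
  intros Hfx Htau Hm.
  set (u := vsub x v) in *. set (m := vnorm u) in *.
  assert (Hxu : x = vadd v u) by (symmetry; apply vadd_subr).
  destruct (Rle_lt_or_eq_dec 0 m (vnorm_ge0 _ u)) as [Hmp | H0]; cycle 1.
  { rewrite Hxu, (vnorm_eq0 _ _ (eq_sym H0)), vadd0, Hv, <- H0.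
    unfold Rdiv. rewrite Rmult_0_l, Rmult_0_r, Rmult_0_l. lra. }
  set (l := m / tau).
  assert (Hl : 0 < l <= 1).
  { unfold l. split; [apply Rdiv_lt_0_compat; lra |].
    apply (Rmult_le_reg_r tau); [lra |]. unfold Rdiv. rewrite Rmult_assoc, Rinv_l; lra. }
  set (y := vscal (/ l) u).
  assert (Hy : vnorm y = tau).
  { unfold y, l. rewrite vnorm_scal, Rabs_pos_eq.
    - fold m. field. lra.
    - left. apply Rinv_0_lt_compat. unfold Rdiv. apply Rmult_lt_0_compat; auto with real. }
  assert (Hly : vscal l y = u).
  { unfold y. rewrite vscalA, Rinv_r by lra. apply vscal1. }
  assert (Hrho : (vnorm (vadd v y) + vnorm (vsub v y)) / 2 - 1 <= rho X tau).
  { apply (rho_lub tau); [lra |]. exists v, y. auto. }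
  assert (Hxle : vnorm x <= (1 - l) + l * vnorm (vadd v y)).
  { rewrite Hxu, <- Hly, vadd_scal_convex. eapply Rle_trans; [apply vnorm_triangle |].
    rewrite !vnorm_scal, Hv, !Rabs_pos_eq by lra. lra. }
  assert (Hvule : vnorm (vsub v u) <= (1 - l) + l * vnorm (vsub v y)).
  { unfold vsub. rewrite <- Hly, vopp_scal, vscalA, Rmult_comm, <- vscalA, <- vopp_scal.
    rewrite vadd_scal_convex. eapply Rle_trans; [apply vnorm_triangle |].
    rewrite !vnorm_scal, Hv, !Rabs_pos_eq by lra. lra. }
  assert (Hvu : 1 <= vnorm (vsub v u)).
  { pose proof (duality_value_bound (vsub v u)) as Hb.
    rewrite (linear_functional_sub f _ _ duality_value_linear) in Hb.
    unfold u in Hb. rewrite (linear_functional_sub f _ _ duality_value_linear) in Hb.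
    rewrite Hfx, duality_value_unit, Rminus_diag, Rminus_0_r, Rabs_R1 in Hb. exact Hb. }
  fold l. nra.
Qed.

Lemma norm_le_one_add_rho x tau : f x = 1 -> 0 <= tau -> vnorm (vsub x v) <= tau / 2 ->
  vnorm x <= 1 + rho X tau.
Proof.
  intros Hfx Htau Hm. pose proof (vnorm_ge0 _ (vsub x v)).
  destruct (Rle_lt_or_eq_dec 0 tau Htau) as [Htau_pos | <-]; cycle 1.
  { assert (Hx : vsub x v = vzero) by (apply vnorm_eq0; lra).
    rewrite <- (vsub_addr x v), Hx, vadd0l, Hv. pose proof (rho_ge0 0). lra. }
  pose proof (norm_le_rho_ratio x tau Hfx Htau_pos ltac:(lra)).
  pose proof (rho_ge0 tau Htau).
  assert (2 * (vnorm (vsub x v) / tau) <= 1).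
  { apply (Rmult_le_reg_r tau); [lra |]. field_simplify; lra. }
  nra.
Qed.

Lemma norm_le_rho_dual w tau : 0 <= tau -> 2 * vnorm (coproj w) <= tau * Rabs (f w) ->
  vnorm w <= (1 + rho X tau) * Rabs (f w).
Proof.
  intros Htau HP. set (c := f w) in *.
  destruct (Req_dec c 0) as [Hc0 | Hc0].
  { assert (Hw : coproj w = vzero).
    { apply vnorm_eq0. pose proof (vnorm_ge0 _ (coproj w)).
      rewrite Hc0, Rabs_R0 in HP. lra. }
    rewrite (coproj_decomp w), Hw, vadd0l. fold c.
    rewrite Hc0, vscal0, vnorm0, Rabs_R0, Rmult_0_r. lra. }
  set (x := vscal (/ c) w).
  assert (Hfx : f x = 1).
  { unfold x. destruct duality_value_linear as [_ Hs]. rewrite Hs. fold c. field. exact Hc0. }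
  assert (Hxv : vsub x v = vscal (/ c) (coproj w)).
  { unfold x, coproj, vsub. fold c. rewrite vscalDr, !vopp_scal, !vscalA.
    do 2 f_equal. field. exact Hc0. }
  assert (Hxn : vnorm (vsub x v) <= tau / 2).
  { rewrite Hxv, vnorm_scal, Rabs_inv.
    pose proof (Rabs_pos_lt c Hc0).
    apply (Rmult_le_reg_l (Rabs c)); [lra |].
    rewrite <- Rmult_assoc, Rinv_r by lra. lra. }
  assert (Hwx : w = vscal c x).
  { unfold x. rewrite vscalA, Rinv_r by exact Hc0. symmetry. apply vscal1. }
  rewrite Hwx at 1. rewrite vnorm_scal, (Rmult_comm (1 + _)).
  apply Rmult_le_compat_l; [apply Rabs_pos |].
  exact (norm_le_one_add_rho x tau Hfx Htau Hxn).
Qed.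

End DualityValue.

Theorem mainTheorem14 (X : Banach) (delta alpha : R) (V L : X -> Prop) :
  uniformly_smooth X ->
  delta > 0 ->
  separated delta V ->
  (exists a b, V a /\ V b /\ a <> b) ->
  is_line L ->
  0 <= alpha <= 43 / 1224 ->
  (forall x, V x -> distL x L <= alpha * delta) ->
  forall (q v : X) (f : X -> R),
    L q -> vnorm v = 1 ->
    (forall x, L x <-> exists t : R, x = vadd q (vscal t v)) ->
    is_duality_value v f ->
    forall v1 v2, V v1 -> V v2 ->
      vnorm (vsub (Jproj q v f v1) (Jproj q v f v2)) <= vnorm (vsub v1 v2) /\
      vnorm (vsub v1 v2) <=
        (1 + rho X (102 * alpha)) * vnorm (vsub (Jproj q v f v1) (Jproj q v f v2)).
Proof.
  intros _ Hdelta Hsep _ _ Halpha Hdist q v f Hq Hv HL Hf v1 v2 Hv1 Hv2.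
  rewrite (Jproj_sub v f Hf), vnorm_scal, Hv, Rmult_1_r.
  split; [apply (duality_value_bound v f Hv Hf) |].
  apply (norm_le_rho_dual v f Hv Hf); [lra |].
  set (w := vsub v1 v2). set (c := f w).
  destruct (classic (v1 = v2)) as [<- | Hne].
  { unfold w. rewrite (coproj_sub v f Hf). unfold vsub at 1. rewrite vaddN, vnorm0.
    pose proof (Rabs_pos c). nra. }
  assert (HP : vnorm (coproj v f w) <= 4 * (alpha * delta)).
  { unfold w. rewrite (coproj_sub v f Hf), <- (vsub_subsub _ _ (coproj v f q)).
    eapply Rle_trans; [apply vnorm_sub_le |].
    pose proof (coproj_near_line v f Hv Hf L q v1 _ Hq HL (Hdist v1 Hv1)).
    pose proof (coproj_near_line v f Hv Hf L q v2 _ Hq HL (Hdist v2 Hv2)).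
    lra. }
  assert (Hwc : vnorm w <= vnorm (coproj v f w) + Rabs c).
  { rewrite (coproj_decomp v f w) at 1. eapply Rle_trans; [apply vnorm_triangle |].
    rewrite vnorm_scal, Hv. fold c. lra. }
  pose proof (Hsep v1 v2 Hv1 Hv2 Hne) as Hwdelta. fold w in Hwdelta.
  (* |c| >= (1 - 4 alpha) delta and 102 (1 - 4 alpha) >= 8 *)
  assert (0 <= alpha * delta * (94 - 408 * alpha)) by
    (apply Rmult_le_pos; [apply Rmult_le_pos |]; lra).
  nra.
Qed.
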